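(* Let $M$ be a smooth manifold with a symmetric affine connection $\nabla$, Riemann tensor $R_{abc}{}^d$ and Ricci tensor $R_{ab}$. Then $$\nabla_a\nabla_m R_{bce}{}^m + \nabla_{b}\nabla_m R_{cae}{}^m+\nabla_c\nabla_m R_{abe}{}^m = R_{am}R_{bce}{}^m + R_{bm}R_{cae}{}^m + R_{cm}R_{abe}{}^m .$$
   Context: Abstract index notation with Einstein summation. The connection has symmetric Christoffel symbols $\Gamma^c_{ab}$; $R_{abc}{}^d = \partial_a \Gamma_{bc}^d - \partial_b\Gamma_{ac}^d - \Gamma_{ac}^k\Gamma_{bk}^d + \Gamma_{ak}^d \Gamma_{bc}^k$ and $R_{ac}=R_{abc}{}^b$. *)

From HB Require Import structures.
From mathcomp Require Import all_boot all_order all_algebra.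
Set Implicit Arguments. Unset Strict Implicit. Unset Printing Implicit Defensive.
Import GRing.Theory.
Local Open Scope ring_scope.

(* A: the commutative ring of (smooth) scalar functions on a chart,
   d i = partial derivative d_i in coordinate i (i : 'I_n),
   Gam c a b = Christoffel symbol Gamma^c_{ab}. *)

Definition is_derivation (A : comRingType) (D : A -> A) : Prop :=
  (forall x y, D (x + y) = D x + D y) /\ (forall x y, D (x * y) = D x * y + x * D y).

Definition commuting_derivations (A : comRingType) (n : nat) (d : 'I_n -> A -> A) : Prop :=
  (forall i, is_derivation (d i)) /\ (forall i j x, d i (d j x) = d j (d i x)).

Definition symmetric_connection (A : comRingType) (n : nat) (Gam : 'I_n -> 'I_n -> 'I_n -> A) : Prop :=
  forall c a b, Gam c a b = Gam c b a.

(* Riem a b c e = R_{abc}^e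
   = d_a Gam^e_{bc} - d_b Gam^e_{ac} - Gam^k_{ac} Gam^e_{bk} + Gam^e_{ak} Gam^k_{bc} *)
Definition Riem (A : comRingType) (n : nat) (d : 'I_n -> A -> A)
  (Gam : 'I_n -> 'I_n -> 'I_n -> A) (a b c e : 'I_n) : A :=
  d a (Gam e b c) - d b (Gam e a c)
  - \sum_(k < n) Gam k a c * Gam e b k + \sum_(k < n) Gam e a k * Gam k b c.

Definition Ricci (A : comRingType) (n : nat) (d : 'I_n -> A -> A)
  (Gam : 'I_n -> 'I_n -> 'I_n -> A) (a c : 'I_n) : A :=
  \sum_(b < n) Riem d Gam a b c b.

Definition cov03 (A : comRingType) (n : nat) (d : 'I_n -> A -> A)
  (Gam : 'I_n -> 'I_n -> 'I_n -> A) (T : 'I_n -> 'I_n -> 'I_n -> A)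
  (a b c e : 'I_n) : A :=
  d a (T b c e)
  - \sum_(k < n) Gam k a b * T k c e
  - \sum_(k < n) Gam k a c * T b k e
  - \sum_(k < n) Gam k a e * T b c k.

Definition cov31 (A : comRingType) (n : nat) (d : 'I_n -> A -> A)
  (Gam : 'I_n -> 'I_n -> 'I_n -> A) (T : 'I_n -> 'I_n -> 'I_n -> 'I_n -> A)
  (a b c e f : 'I_n) : A :=
  d a (T b c e f)
  - \sum_(k < n) Gam k a b * T k c e f
  - \sum_(k < n) Gam k a c * T b k e f
  - \sum_(k < n) Gam k a e * T b c k f
  + \sum_(k < n) Gam f a k * T b c e k.

Definition divRiem (A : comRingType) (n : nat) (d : 'I_n -> A -> A)
  (Gam : 'I_n -> 'I_n -> 'I_n -> A) (b c e : 'I_n) : A :=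
  \sum_(m < n) cov31 d Gam (Riem d Gam) m b c e m.

(* The
   proof only uses the tensor calculus of the connection:
   1. algebraic symmetries of R_{abc}^d: antisymmetry in a b and the first
      Bianchi identity;
   2. the Ricci identities [nabla_a, nabla_b] w_e = -R_{abe}^m w_m for
      covectors and its analogue for (0,2)-tensors; summed cyclically over
      a b c, the (0,2) identity collapses by the first Bianchi identity to
      a single curvature-times-tensor term (lemma [hess02_cyclic]);
   3. the second Bianchi identity, obtained by contracting nabla R with an
      arbitrary covector w, using the Ricci identity to trade R_{bce}^m w_m
      for a commutator of second derivatives of w, and then 2. for nabla w;
   4. its contraction nabla_m R_{bce}^m = nabla_c R_{be} - nabla_b R_{ce}.
   The theorem follows by applying 4. and then 2. to the Ricci tensor. *)
From mathcomp Require Import all_boot all_order all_algebra.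
From mathcomp Require Import ring.
Set Implicit Arguments. Unset Strict Implicit. Unset Printing Implicit Defensive.
Import GRing.Theory.
Local Open Scope ring_scope.

Section Derivation.
Variables (A : comRingType) (D : A -> A).
Hypothesis hD : is_derivation D.

Lemma derivationD x y : D (x + y) = D x + D y. Proof. exact: hD.1. Qed.
Lemma derivationM x y : D (x * y) = D x * y + x * D y. Proof. exact: hD.2. Qed.

Lemma derivation0 : D 0 = 0.
Proof. by apply: (addrI (D 0)); rewrite -derivationD !addr0. Qed.

Lemma derivationN x : D (- x) = - D x.
Proof. by apply: (addrI (D x)); rewrite -derivationD !subrr derivation0. Qed.

Lemma derivationB x y : D (x - y) = D x - D y.
Proof. by rewrite derivationD derivationN. Qed.

Lemma derivation_sum (I : Type) (r : seq I) (P : pred I) (F : I -> A) :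
  D (\sum_(i <- r | P i) F i) = \sum_(i <- r | P i) D (F i).
Proof. exact: (big_morph D derivationD derivation0). Qed.
End Derivation.

Lemma solve_sub (R : comRingType) (x y z : R) : x - y = z -> x = z + y.
Proof. by move<-; ring. Qed.

Lemma solve_sum3 (R : comRingType) (x y z : R) : x + y + z = 0 -> x = - y - z.
Proof. by move=> h; transitivity (x + y + z - y - z); [ring | rewrite h; ring]. Qed.

Lemma regroup3 (R : comRingType) (x1 x2 x3 y1 y2 y3 : R) :
  (x1 - y1) + (x2 - y2) + (x3 - y3) = (x1 + x2 + x3) - (y1 + y2 + y3).
Proof. ring. Qed.

Section Connection.
Variables (A : comRingType) (n : nat).
Variable d : 'I_n -> A -> A.
Variable Gam : 'I_n -> 'I_n -> 'I_n -> A.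
Hypothesis hd : commuting_derivations d.
Hypothesis hsym : symmetric_connection Gam.

Notation R := (Riem d Gam).
Notation Ric := (Ricci d Gam).

Lemma d_derivation i : is_derivation (d i). Proof. by case: hd. Qed.

Lemma dM i (x y : A) : d i (x * y) = d i x * y + x * d i y. Proof. exact: (derivationM (d_derivation i)). Qed.
Lemma dN i (x : A) : d i (- x) = - d i x. Proof. exact: (derivationN (d_derivation i)). Qed.
Lemma dB i (x y : A) : d i (x - y) = d i x - d i y. Proof. exact: (derivationB (d_derivation i)). Qed.
Lemma dS i (F : 'I_n -> A) : d i (\sum_(k < n) F k) = \sum_(k < n) d i (F k).
Proof. exact: (derivation_sum (d_derivation i)). Qed.
Lemma dC i j (x : A) : d i (d j x) = d j (d i x). Proof. by case: hd. Qed.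

Definition cov01 (w : 'I_n -> A) (a c : 'I_n) : A :=
  d a (w c) - \sum_(k < n) Gam k a c * w k.
Definition cov02 (U : 'I_n -> 'I_n -> A) (a b c : 'I_n) : A :=
  d a (U b c) - \sum_(k < n) Gam k a b * U k c - \sum_(k < n) Gam k a c * U b k.

Notation nabla2 U := (cov03 d Gam (cov02 U)).

Lemma cov03_ext (T1 T2 : 'I_n -> 'I_n -> 'I_n -> A) a b c e :
  (forall x y z, T1 x y z = T2 x y z) ->
  cov03 d Gam T1 a b c e = cov03 d Gam T2 a b c e.
Proof.
move=> eqT; rewrite /cov03 eqT.
by congr (_ - _ - _ - _); apply: eq_bigr => k _; rewrite eqT.
Qed.

Lemma cov03B (T1 T2 : 'I_n -> 'I_n -> 'I_n -> A) a b c e :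
  cov03 d Gam (fun x y z => T1 x y z - T2 x y z) a b c e
  = cov03 d Gam T1 a b c e - cov03 d Gam T2 a b c e.
Proof.
have sumB (F G H : 'I_n -> A) :
    \sum_(k < n) F k * (G k - H k) = \sum_(k < n) F k * G k - \sum_(k < n) F k * H k.
  by rewrite -sumrB; apply: eq_bigr => k _; rewrite mulrBr.
rewrite /cov03 dB !sumB; ring.
Qed.

Lemma cov03_transpose (T : 'I_n -> 'I_n -> 'I_n -> A) a b c e :
  cov03 d Gam (fun x y z => T y x z) a b c e = cov03 d Gam T a c b e.
Proof. rewrite /cov03; ring. Qed.

Lemma cov03_contract (T : 'I_n -> 'I_n -> 'I_n -> 'I_n -> A) (w : 'I_n -> A) a b c e :
  cov03 d Gam (fun b c e => \sum_(k < n) T b c e k * w k) a b c e =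
  \sum_(k < n) cov31 d Gam T a b c e k * w k + \sum_(k < n) T b c e k * cov01 w a k.
Proof.
have swap (F : 'I_n -> A) (G : 'I_n -> 'I_n -> A) :
    \sum_(k < n) F k * (\sum_(m < n) G k m * w m)
    = \sum_(k < n) \sum_(m < n) F m * G m k * w k.
  rewrite exchange_big /=; apply: eq_bigr => k _; rewrite mulr_sumr.
  by apply: eq_bigr => m _; rewrite mulrA.
have expand_cov31 : \sum_(k < n) cov31 d Gam T a b c e k * w k
    = \sum_(k < n) d a (T b c e k) * w k
    - \sum_(k < n) \sum_(m < n) Gam m a b * T m c e k * w k
    - \sum_(k < n) \sum_(m < n) Gam m a c * T b m e k * w k
    - \sum_(k < n) \sum_(m < n) Gam m a e * T b c m k * w k
    + \sum_(k < n) \sum_(m < n) Gam k a m * T b c e m * w k.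
  rewrite -!sumrB -big_split /=; apply: eq_bigr => k _.
  by rewrite /cov31 !mulrDl !mulNr !mulr_suml.
have expand_cov01 : \sum_(k < n) T b c e k * cov01 w a k
    = \sum_(k < n) T b c e k * d a (w k)
    - \sum_(k < n) \sum_(m < n) Gam k a m * T b c e m * w k.
  rewrite exchange_big /= -sumrB; apply: eq_bigr => k _.
  rewrite /cov01 mulrBr mulr_sumr; congr (_ - _).
  by apply: eq_bigr => m _; ring.
have leibniz : \sum_(k < n) d a (T b c e k * w k)
    = \sum_(k < n) d a (T b c e k) * w k + \sum_(k < n) T b c e k * d a (w k).
  by rewrite -big_split; apply: eq_bigr => k _; rewrite dM.
rewrite /cov03 dS expand_cov31 expand_cov01 leibniz !swap; ring.
Qed.

Lemma Riem_antisym a b c e : R b a c e = - R a b c e.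
Proof.
rewrite /Riem.
have -> : \sum_(k < n) Gam k b c * Gam e a k = \sum_(k < n) Gam e a k * Gam k b c
  by apply: eq_bigr => k _; rewrite mulrC.
have -> : \sum_(k < n) Gam e b k * Gam k a c = \sum_(k < n) Gam k a c * Gam e b k
  by apply: eq_bigr => k _; rewrite mulrC.
ring.
Qed.

(* First Bianchi identity; this is where the connection must be torsion-free. *)
Lemma Riem_cyclic a b c f : R a b c f + R b c a f + R c a b f = 0.
Proof.
rewrite /Riem.
have -> : \sum_(k < n) Gam f b k * Gam k c a = \sum_(k < n) Gam k a c * Gam f b k
  by apply: eq_bigr => k _; rewrite (hsym k c a) mulrC.
have -> : \sum_(k < n) Gam f c k * Gam k a b = \sum_(k < n) Gam k b a * Gam f c k
  by apply: eq_bigr => k _; rewrite (hsym k a b) mulrC.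
have -> : \sum_(k < n) Gam f a k * Gam k b c = \sum_(k < n) Gam k c b * Gam f a k
  by apply: eq_bigr => k _; rewrite (hsym k b c) mulrC.
rewrite (hsym f c a) (hsym f b a) (hsym f c b); ring.
Qed.

Lemma Riem_contract a b c (V : 'I_n -> A) :
  \sum_(m < n) R a b c m * V m =
  \sum_(m < n) d a (Gam m b c) * V m - \sum_(m < n) d b (Gam m a c) * V m
  - \sum_(k < n) \sum_(m < n) Gam k a c * (Gam m b k * V m)
  + \sum_(k < n) \sum_(m < n) Gam k b c * (Gam m a k * V m).
Proof.
rewrite [\sum_(k < n) \sum_(m < n) Gam k a c * _]exchange_big.
rewrite [\sum_(k < n) \sum_(m < n) Gam k b c * _]exchange_big /=.
rewrite -!sumrB -big_split /=; apply: eq_bigr => m _.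
rewrite /Riem !mulrDl !mulNr !mulr_suml.
have -> : \sum_(k < n) Gam k a c * Gam m b k * V m
    = \sum_(k < n) Gam k a c * (Gam m b k * V m)
  by apply: eq_bigr => k _; rewrite mulrA.
have -> : \sum_(k < n) Gam m a k * Gam k b c * V m
    = \sum_(k < n) Gam k b c * (Gam m a k * V m)
  by apply: eq_bigr => k _; ring.
ring.
Qed.

(* Ricci identity for a covector: the second covariant derivative splits into
   a part symmetric in b c and a remainder whose antisymmetrization is the
   curvature term. *)
Section RicciIdentityCovector.
Variables (w : 'I_n -> A) (e : 'I_n).

Let hess01_sym b c : A :=
  d b (d c (w e)) - \sum_(k < n) Gam k b c * cov01 w k e
  - \sum_(k < n) (Gam k c e * d b (w k) + Gam k b e * d c (w k)).
Let hess01_rest b c : A :=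
  - \sum_(k < n) d b (Gam k c e) * w k
  + \sum_(k < n) \sum_(m < n) Gam k b e * (Gam m c k * w m).

Lemma hess01_split b c : cov02 (cov01 w) b c e = hess01_sym b c + hess01_rest b c.
Proof.
rewrite /cov02 {1}/cov01 dB dS /hess01_sym /hess01_rest.
have -> : \sum_(k < n) d b (Gam k c e * w k)
    = \sum_(k < n) d b (Gam k c e) * w k + \sum_(k < n) Gam k c e * d b (w k).
  by rewrite -big_split; apply: eq_bigr => k _; rewrite dM.
have -> : \sum_(k < n) Gam k b e * cov01 w c k
    = \sum_(k < n) Gam k b e * d c (w k)
    - \sum_(k < n) \sum_(m < n) Gam k b e * (Gam m c k * w m).
  by rewrite -sumrB; apply: eq_bigr => k _; rewrite /cov01 mulrBr mulr_sumr.
rewrite big_split /=; ring.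
Qed.

Lemma hess01_sym_sym b c : hess01_sym b c = hess01_sym c b.
Proof.
rewrite /hess01_sym dC.
have -> : \sum_(k < n) Gam k b c * cov01 w k e = \sum_(k < n) Gam k c b * cov01 w k e
  by apply: eq_bigr => k _; rewrite hsym.
congr (_ - _ - _); apply: eq_bigr => k _; exact: addrC.
Qed.

Lemma ricci_identity01 b c :
  \sum_(m < n) R b c e m * w m = cov02 (cov01 w) c b e - cov02 (cov01 w) b c e.
Proof.
rewrite !hess01_split hess01_sym_sym Riem_contract /hess01_rest; ring.
Qed.
End RicciIdentityCovector.

Section RicciIdentityTensor.
Variables (U : 'I_n -> 'I_n -> A) (c e : 'I_n).

Let hess02_sym a b : A :=
  d a (d b (U c e)) - \sum_(k < n) Gam k a b * cov02 U k c e
  - \sum_(k < n) (Gam k b c * d a (U k e) + Gam k a c * d b (U k e))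
  - \sum_(k < n) (Gam k b e * d a (U c k) + Gam k a e * d b (U c k))
  + (\sum_(k < n) \sum_(m < n) Gam k a c * (Gam m b e * U k m)
     + \sum_(k < n) \sum_(m < n) Gam k a e * (Gam m b c * U m k)).
Let hess02_rest a b : A :=
  - \sum_(k < n) d a (Gam k b c) * U k e - \sum_(k < n) d a (Gam k b e) * U c k
  + \sum_(k < n) \sum_(m < n) Gam k a c * (Gam m b k * U m e)
  + \sum_(k < n) \sum_(m < n) Gam k a e * (Gam m b k * U c m).

Lemma hess02_split a b :
  nabla2 U a b c e = hess02_sym a b + hess02_rest a b.
Proof.
rewrite /cov03 {1}/cov02 !dB !dS /hess02_sym /hess02_rest.
have -> : \sum_(k < n) d a (Gam k b c * U k e)
    = \sum_(k < n) d a (Gam k b c) * U k e + \sum_(k < n) Gam k b c * d a (U k e).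
  by rewrite -big_split; apply: eq_bigr => k _; rewrite dM.
have -> : \sum_(k < n) d a (Gam k b e * U c k)
    = \sum_(k < n) d a (Gam k b e) * U c k + \sum_(k < n) Gam k b e * d a (U c k).
  by rewrite -big_split; apply: eq_bigr => k _; rewrite dM.
have -> : \sum_(k < n) Gam k a c * cov02 U b k e
    = \sum_(k < n) Gam k a c * d b (U k e)
    - \sum_(k < n) \sum_(m < n) Gam k a c * (Gam m b k * U m e)
    - \sum_(k < n) \sum_(m < n) Gam k a c * (Gam m b e * U k m).
  by rewrite -!sumrB; apply: eq_bigr => k _; rewrite /cov02 !mulrBr !mulr_sumr.
have -> : \sum_(k < n) Gam k a e * cov02 U b c k
    = \sum_(k < n) Gam k a e * d b (U c k)
    - \sum_(k < n) \sum_(m < n) Gam k a e * (Gam m b c * U m k)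
    - \sum_(k < n) \sum_(m < n) Gam k a e * (Gam m b k * U c m).
  by rewrite -!sumrB; apply: eq_bigr => k _; rewrite /cov02 !mulrBr !mulr_sumr.
rewrite !big_split /=; ring.
Qed.

Lemma hess02_sym_sym a b : hess02_sym a b = hess02_sym b a.
Proof.
rewrite /hess02_sym dC.
have -> : \sum_(k < n) Gam k a b * cov02 U k c e = \sum_(k < n) Gam k b a * cov02 U k c e
  by apply: eq_bigr => k _; rewrite hsym.
have swap x y : \sum_(k < n) \sum_(m < n) Gam k x c * (Gam m y e * U k m)
    = \sum_(k < n) \sum_(m < n) Gam k y e * (Gam m x c * U m k).
  by rewrite exchange_big /=; apply: eq_bigr => k _; apply: eq_bigr => m _; ring.
have addC (F G : 'I_n -> A) :
    \sum_(k < n) (F k + G k) = \sum_(k < n) (G k + F k).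
  by apply: eq_bigr => k _; exact: addrC.
rewrite [in LHS]addC [X in _ - X + _ = _]addC !swap; ring.
Qed.

Lemma ricci_identity02 a b :
  nabla2 U a b c e - nabla2 U b a c e =
  - \sum_(k < n) R a b c k * U k e - \sum_(k < n) R a b e k * U c k.
Proof.
rewrite !hess02_split (hess02_sym_sym b a).
rewrite (Riem_contract a b c (fun m => U m e)) (Riem_contract a b e (fun m => U c m)).
rewrite /hess02_rest; ring.
Qed.
End RicciIdentityTensor.

(* Cyclic sum of the Ricci identity for a (0,2)-tensor: by the first Bianchi
   identity only the terms acting on the last slot of U survive. *)
Lemma hess02_cyclic (U : 'I_n -> 'I_n -> A) a b c e :
  (nabla2 U a c b e - nabla2 U a b c e) + (nabla2 U b a c e - nabla2 U b c a e)
  + (nabla2 U c b a e - nabla2 U c a b e)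
  = \sum_(k < n) U a k * R b c e k + \sum_(k < n) U b k * R c a e k
  + \sum_(k < n) U c k * R a b e k.
Proof.
have bianchi1 : \sum_(k < n) R a b c k * U k e + \sum_(k < n) R b c a k * U k e
    + \sum_(k < n) R c a b k * U k e = 0.
  by rewrite -!big_split /=; apply: big1 => k _; rewrite -!mulrDl Riem_cyclic mul0r.
have commute (x y z : 'I_n) : \sum_(k < n) R x y e k * U z k = \sum_(k < n) U z k * R x y e k.
  by apply: eq_bigr => k _; rewrite mulrC.
rewrite (solve_sub (ricci_identity02 U c e a b)) (solve_sub (ricci_identity02 U a e b c)).
rewrite (solve_sub (ricci_identity02 U b e c a)) (solve_sum3 bianchi1) !commute; ring.
Qed.

(* Second Bianchi identity, tested against an arbitrary covector w: the
   contraction R_{bce}^k w_k is a commutator of second derivatives of w. *)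
Section SecondBianchi.
Variable w : 'I_n -> A.

Lemma cov31_contract a b c e :
  \sum_(k < n) cov31 d Gam R a b c e k * w k
  = nabla2 (cov01 w) a c b e - nabla2 (cov01 w) a b c e
    - \sum_(k < n) cov01 w a k * R b c e k.
Proof.
rewrite -(cov03_transpose (cov02 (cov01 w))) -cov03B.
rewrite -(@cov03_ext (fun x y z => \sum_(m < n) R x y z m * w m)); last first.
  by move=> x y z; rewrite ricci_identity01.
rewrite cov03_contract.
have -> : \sum_(k < n) cov01 w a k * R b c e k = \sum_(k < n) R b c e k * cov01 w a k
  by apply: eq_bigr => k _; rewrite mulrC.
ring.
Qed.

Lemma bianchi2_contract a b c e :
  \sum_(k < n) (cov31 d Gam R a b c e k + cov31 d Gam R b c a e k
                + cov31 d Gam R c a b e k) * w k = 0.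
Proof.
have distribute (F G H : 'I_n -> A) : \sum_(k < n) (F k + G k + H k) * w k
    = \sum_(k < n) F k * w k + \sum_(k < n) G k * w k + \sum_(k < n) H k * w k.
  by rewrite -!big_split; apply: eq_bigr => k _ /=; ring.
rewrite distribute !cov31_contract regroup3 hess02_cyclic; ring.
Qed.
End SecondBianchi.

(* Second Bianchi identity: the cyclic sum of nabla_a R_{bce}^f vanishes;
   take w to be the coordinate covector dx^f above. *)
Lemma bianchi2 a b c e f :
  cov31 d Gam R a b c e f + cov31 d Gam R b c a e f + cov31 d Gam R c a b e f = 0.
Proof.
have := bianchi2_contract (fun k => (k == f)%:R) a b c e.
rewrite (bigD1 f) //= eqxx mulr1 big1 ?addr0 // => k /negbTE ->.
by rewrite mulr0.
Qed.

Lemma cov31_antisym a y z e f : cov31 d Gam R a y z e f = - cov31 d Gam R a z y e f.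
Proof.
have antisym (G : 'I_n -> A) (T1 T2 : 'I_n -> A) :
    (forall k, T1 k = - T2 k) -> \sum_(k < n) G k * T1 k = - \sum_(k < n) G k * T2 k.
  by move=> eqT; rewrite -sumrN; apply: eq_bigr => k _; rewrite eqT mulrN.
rewrite /cov31 (Riem_antisym z y e f) dN.
rewrite (antisym _ (fun k => R k y e f) (fun k => R y k e f)) => [|k]; last exact: Riem_antisym.
rewrite (antisym _ (fun k => R z k e f) (fun k => R k z e f)) => [|k]; last exact: Riem_antisym.
rewrite (antisym _ (fun k => R z y k f) (fun k => R y z k f)) => [|k]; last exact: Riem_antisym.
rewrite (antisym _ (fun k => R z y e k) (fun k => R y z e k)) => [|k]; last exact: Riem_antisym.
ring.
Qed.

Lemma cov31_trace b c e : \sum_(m < n) cov31 d Gam R b c m e m = cov02 Ric b c e.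
Proof.
have expand : \sum_(m < n) cov31 d Gam R b c m e m = \sum_(m < n) d b (R c m e m)
    - \sum_(m < n) \sum_(k < n) Gam k b c * R k m e m
    - \sum_(m < n) \sum_(k < n) Gam k b m * R c k e m
    - \sum_(m < n) \sum_(k < n) Gam k b e * R c m k m
    + \sum_(m < n) \sum_(k < n) Gam m b k * R c m e k.
  by rewrite -!sumrB -big_split /=; apply: eq_bigr => m _.
have trace_first : \sum_(m < n) \sum_(k < n) Gam k b c * R k m e m
    = \sum_(k < n) Gam k b c * Ric k e.
  by rewrite exchange_big /=; apply: eq_bigr => k _; rewrite /Ricci mulr_sumr.
have trace_last : \sum_(m < n) \sum_(k < n) Gam k b e * R c m k m
    = \sum_(k < n) Gam k b e * Ric c k.
  by rewrite exchange_big /=; apply: eq_bigr => k _; rewrite /Ricci mulr_sumr.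
(* the connection terms on the contracted pair of slots cancel *)
have trace_pair : \sum_(m < n) \sum_(k < n) Gam k b m * R c k e m
    = \sum_(m < n) \sum_(k < n) Gam m b k * R c m e k
  by rewrite exchange_big.
rewrite expand trace_first trace_last trace_pair /cov02 [Ric c e]/Ricci dS; ring.
Qed.

Lemma divRiem_eq b c e : divRiem d Gam b c e = cov02 Ric c b e - cov02 Ric b c e.
Proof.
rewrite /divRiem -!cov31_trace -sumrB; apply: eq_bigr => m _.
have := bianchi2 m b c e m; rewrite (cov31_antisym c m b).
by move/solve_sum3 ->; ring.
Qed.

End Connection.

Theorem mainTheorem3 (A : comRingType) (n : nat) (d : 'I_n -> A -> A)
  (Gam : 'I_n -> 'I_n -> 'I_n -> A)
  (hd : commuting_derivations d) (hsym : symmetric_connection Gam)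
  (a b c e : 'I_n) :
  cov03 d Gam (divRiem d Gam) a b c e
  + cov03 d Gam (divRiem d Gam) b c a e
  + cov03 d Gam (divRiem d Gam) c a b e
  = \sum_(m < n) Ricci d Gam a m * Riem d Gam b c e m
  + \sum_(m < n) Ricci d Gam b m * Riem d Gam c a e m
  + \sum_(m < n) Ricci d Gam c m * Riem d Gam a b e m.
Proof.
(* by the contracted Bianchi identity, nabla_a (div R)_{bce} is the
   antisymmetrized second derivative nabla_a nabla_c R_{be} - nabla_a nabla_b R_{ce} *)
have nabla_div x y z : cov03 d Gam (divRiem d Gam) x y z e
    = cov03 d Gam (cov02 d Gam (Ricci d Gam)) x z y e
    - cov03 d Gam (cov02 d Gam (Ricci d Gam)) x y z e.
  rewrite (@cov03_ext A n d Gam _ (fun p q r => cov02 d Gam (Ricci d Gam) q p r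
                                  - cov02 d Gam (Ricci d Gam) p q r)).
    by rewrite (@cov03B A n d Gam hd) cov03_transpose.
  by move=> p q r; rewrite (@divRiem_eq A n d Gam hd hsym).
(* the cyclic sum of these commutators is given by the Ricci identity *)
by rewrite !nabla_div (@hess02_cyclic A n d Gam hd hsym).
Qed.
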